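(* Let $F$ be a violating edge set and let $(\mathcal{T},\mathcal{M},y)$ be a tree embedding that is good for $F$. Let $E'\subseteq E(\mathcal{T})\setminus\mathcal{M}^{-1}(F)$ and suppose that for every $(A,B)\in Z_F$ there is a path in $E'$ connecting (the leaves corresponding to) $A$ to (the leaves corresponding to) $B$. Then for every $i\in[k]$ there is an $s_i$–$t_i$ path in the graph with edge set $(\mathcal{M}(E')\cup H)\setminus F$, where $\mathcal{M}(E')=\bigcup_{f\in E'}\mathcal{M}_2(f)$.
   Context: Setting: $G=(V,E)$ is an undirected graph whose edges are partitioned into safe and unsafe edges; $p,q$ are nonnegative integers with $p+q\ge1$; $(s_i,t_i)$, $i\in[k]$, are terminal pairs; $H\subseteq E$ is such that every pair is $(p,q)$-flex-connected in $H$ (every cut $\delta_H(S)$ separating $s_i$ from $t_i$ has at least $p$ safe edges or at least $p+q$ edges). A violating edge set is $F=\delta_H(S)$ for some $S$ separating some pair with $|\delta_H(S)|=p+q$ and at most $p-1$ safe edges. Let $\beta\ge1$ and let $\tilde x:E\to\mathbb{R}_{>0}$ be capacities. A tree embedding of $(G,\tilde x)$ is a tree $\mathcal{T}$ with $\mathcal{M}_1:V(\mathcal{T})\to V$ restricting to a bijection between leaves of $\mathcal{T}$ and $V$ (we identify each vertex of $V$ with its leaf), and $\mathcal{M}_2$ mapping each tree edge $(a,b)$ to a path in $G$ between $\mathcal{M}_1(a)$ and $\mathcal{M}_1(b)$; capacities $y(f)=\tilde x(\delta_G(A'))$ where $A'$ is the vertex set corresponding to the leaves of one component of $\mathcal{T}-f$;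 $\mathcal{M}^{-1}(F)=\{f\in E(\mathcal{T}):\mathcal{M}_2(f)\cap F\neq\emptyset\}$. The embedding is good for $F$ if $y(\mathcal{M}^{-1}(F))\le\frac12$. Let $\mathcal{Q}_F$ be the set of vertex sets of connected components of $(V,H\setminus F)$; $Q_{s_i},Q_{t_i}\in\mathcal{Q}_F$ are the components containing $s_i,t_i$. A component $Q\in\mathcal{Q}_F$ is shattered if its leaves do not all lie in one connected component of $\mathcal{T}-\mathcal{M}^{-1}(F)$. Disjoint $A,B\subseteq V$ partition the shattered components if every shattered component is contained in $A$ or in $B$. $Z_F=\{(A\cup Q_{s_i},B\cup Q_{t_i}): (A,B)\text{ partitions the shattered components}, i\in[k]\}$. *)

From HB Require Import structures.
From mathcomp Require Import all_boot all_order all_algebra.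
Set Implicit Arguments. Unset Strict Implicit. Unset Printing Implicit Defensive.
Import Order.TTheory GRing.Theory Num.Theory.
Local Open Scope ring_scope.

Section Graphs.
Variables (V E : finType) (ends : E -> V * V).

Definition joins (e : E) (u v : V) : bool :=
  (((ends e).1 == u) && ((ends e).2 == v)) || (((ends e).1 == v) && ((ends e).2 == u)).

Definition adj (S : {set E}) : rel V := fun u v => [exists e in S, joins e u v].

Definition conn (S : {set E}) (u v : V) : bool := connect (adj S) u v.

Definition cut (S : {set E}) (X : {set V}) : {set E} :=
  [set e in S | ((ends e).1 \in X) != ((ends e).2 \in X)].

Definition next_vertex (e : E) (u : V) : option V :=
  if (ends e).1 == u then Some (ends e).2
  else if (ends e).2 == u then Some (ends e).1 else None.

Fixpoint walk_verts (u : V) (es : seq E) : option (seq V) :=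
  match es with
  | [::] => Some [:: u]
  | e :: es' => match next_vertex e u with
                | Some w => omap (cons u) (walk_verts w es')
                | None => None
                end
  end.

Definition gpath (u v : V) (es : seq E) : bool :=
  if walk_verts u es is Some vs then (last u vs == v) && uniq vs else false.

Definition is_tree : Prop :=
  (forall a b : V, conn setT a b) /\
  (forall e : E, ~~ conn (~: [set e]) (ends e).1 (ends e).2).

Definition leaf (a : V) : bool := (#|[set e | (ends e).1 == a] :|: [set e | (ends e).2 == a]| <= 1)%N.
End Graphs.

Section Flex.
Variables (V E : finType) (ends : E -> V * V) (safe : {set E}) (p q k : nat)
          (s t : 'I_k -> V) (H : {set E}).

Definition separates (X : {set V}) (i : 'I_k) : bool := (s i \in X) != (t i \in X).

Definition flex_connected : Prop :=
  forall (X : {set V}) (i : 'I_k), separates X i ->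
    (p <= #|cut ends H X :&: safe|)%N \/ (p + q <= #|cut ends H X|)%N.

Definition violating (F : {set E}) : Prop :=
  exists (X : {set V}) (i : 'I_k), separates X i /\ F = cut ends H X /\
    #|F| = (p + q)%N /\ (#|F :&: safe| < p)%N.
End Flex.

Section Embedding.
Variables (R : realFieldType) (V E : finType) (ends : E -> V * V) (xt : E -> R)
          (TV TE : finType) (tends : TE -> TV * TV) (M1 : TV -> V) (M2 : TE -> seq E).

Definition tree_embedding : Prop :=
  is_tree tends /\
  {in leaf tends &, injective M1} /\
  (forall v : V, exists2 a, leaf tends a & M1 a = v) /\
  (forall f : TE, gpath ends (M1 (tends f).1) (M1 (tends f).2) (M2 f)).

Definition leaf_verts (C : {set TV}) : {set V} :=
  [set v | [exists a in C, leaf tends a && (M1 a == v)]].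

(* A' : leaves in the component of T - f containing the first endpoint of f *)
Definition side (f : TE) : {set V} :=
  leaf_verts [set a | conn tends (~: [set f]) (tends f).1 a].

Definition ycap (f : TE) : R := \sum_(e in cut ends setT (side f)) xt e.

Definition Minv (F : {set E}) : {set TE} := [set f | [exists e in F, e \in M2 f]].

Definition Mimg (E' : {set TE}) : {set E} := [set e | [exists f in E', e \in M2 f]].

Definition good (F : {set E}) : Prop := \sum_(f in Minv F) ycap f <= 2^-1.

Definition comp (H F : {set E}) (v : V) : {set V} := [set u | conn ends (H :\: F) v u].

Definition shattered (H F : {set E}) (Q : {set V}) : Prop :=
  exists a b, [/\ leaf tends a, leaf tends b, M1 a \in Q, M1 b \in Q &
                  ~~ conn tends (~: Minv F) a b].

Definition partitions_shattered (H F : {set E}) (A B : {set V}) : Prop :=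
  [disjoint A & B] /\
  forall v : V, shattered H F (comp H F v) -> comp H F v \subset A \/ comp H F v \subset B.

Definition inZ (k : nat) (s t : 'I_k -> V) (H F : {set E}) (A' B' : {set V}) : Prop :=
  exists (A B : {set V}) (i : 'I_k), partitions_shattered H F A B /\
    A' = A :|: comp H F (s i) /\ B' = B :|: comp H F (t i).
End Embedding.

From Pilot Require Import Defs.
From HB Require Import structures.
From mathcomp Require Import all_boot all_order all_algebra.
Import Order.TTheory GRing.Theory Num.Theory.
Local Open Scope ring_scope.

(* Let C be the set of vertices reachable from s_i in (M(E') ∪ H) \ F.  Since
   H \ F is part of that graph, every component of (V, H \ F) lies in C or in
   its complement, so (C ∪ Q_{s_i}, ~C ∪ Q_{t_i}) belongs to Z_F.  The E'-path
   given for this pair maps, edge by edge, to paths of M(E') \ F; it starts in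
   C, so it ends in C, hence in Q_{t_i}, and t_i is reachable from s_i. *)

Set Implicit Arguments.
Unset Strict Implicit.

Lemma connect_homo (T T' : finType) (e : rel T) (e' : rel T') (f : T -> T') :
  {homo f : x y / e x y >-> connect e' x y} ->
  {homo f : x y / connect e x y >-> connect e' x y}.
Proof.
move=> fe x _ /connectP[p ep ->]; elim: p x ep => [|y p IHp] x /=.
  by rewrite connect0.
by case/andP=> /fe xy /IHp; apply: connect_trans.
Qed.

Section Connectivity.
Variables (V E : finType) (ends : E -> V * V).
Implicit Types (S T : {set E}) (u v w x : V) (e : E) (es : seq E).

Lemma adj_sym S : symmetric (adj ends S).
Proof.
move=> u v; apply/existsP/existsP => -[e /andP[eS j]];
  by exists e; rewrite eS /joins orbC.
Qed.

Lemma conn_sym S : connect_sym (adj ends S).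
Proof. exact/sym_connect_sym/adj_sym. Qed.

Lemma conn_sub S T u v : T \subset S -> conn ends T u v -> conn ends S u v.
Proof.
move=> sTS; apply: connect_sub => {}u {}v /existsP[e /andP[eT j]].
by apply: connect1; apply/existsP; exists e; rewrite (subsetP sTS).
Qed.

Lemma adj_joins S e u v : e \in S -> joins ends e u v -> adj ends S u v.
Proof. by move=> eS j; apply/existsP; exists e; rewrite eS. Qed.

Lemma next_vertex_joins e u w : next_vertex ends e u = Some w -> joins ends e u w.
Proof.
rewrite /next_vertex /joins; case: ifP => [/eqP-> [<-]|_]; first by rewrite !eqxx.
by case: ifP => // /eqP-> [<-]; rewrite !eqxx orbT.
Qed.

Lemma walk_verts_conn S u es vs : {subset es <= S} ->
  walk_verts ends u es = Some vs -> {in vs, forall v, conn ends S u v}.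
Proof.
elim: es u vs => [|e es IH] u vs sub /=.
  by case=> <- v; rewrite inE => /eqP->; apply: connect0.
case Enext: next_vertex => [w|] //; case Ew: walk_verts => [vs'|] //= [<-] v.
rewrite inE => /predU1P[-> | v_vs']; first exact: connect0.
have sub' : {subset es <= S} by move=> x xes; apply: sub; rewrite inE xes orbT.
apply: connect_trans (IH _ _ sub' Ew _ v_vs').
by apply/connect1/(adj_joins (sub _ (mem_head _ _)))/next_vertex_joins.
Qed.

Lemma gpath_conn S u v es :
  {subset es <= S} -> gpath ends u v es -> conn ends S u v.
Proof.
rewrite /gpath; case Ew: walk_verts => [vs|] // sub /andP[/eqP <- _].
have := mem_last u vs; rewrite inE => /predU1P[-> | ]; first exact: connect0.
exact: (walk_verts_conn sub Ew).
Qed.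

Lemma conn_class_mem S T x u v :
  T \subset S -> conn ends T u v -> conn ends S x u = conn ends S x v.
Proof. by move=> sTS /(conn_sub sTS) uv; apply: (same_connect_r (@conn_sym S)). Qed.

Lemma conn_class_split S T x v : T \subset S ->
  let C := [set u | conn ends S x u] in
  [set u | conn ends T v u] \subset C \/ [set u | conn ends T v u] \subset ~: C.
Proof.
move=> sTS C; have [xv|xNv] := boolP (conn ends S x v); [left|right];
  by apply/subsetP=> u; rewrite !inE => vu; rewrite -(conn_class_mem x sTS vu).
Qed.

End Connectivity.

Section TreeImage.
Variables (V E TV TE : finType) (ends : E -> V * V) (tends : TE -> TV * TV).
Variables (M1 : TV -> V) (M2 : TE -> seq E).
Hypothesis M2_path :
  forall f : TE, gpath ends (M1 (tends f).1) (M1 (tends f).2) (M2 f).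

Lemma conn_tree_image (S : {set E}) (E' : {set TE}) a b :
  (forall f, f \in E' -> {subset M2 f <= S}) ->
  conn tends E' a b -> conn ends S (M1 a) (M1 b).
Proof.
move=> subE'; apply: connect_homo => {}a {}b /existsP[f /andP[fE' j]].
have := gpath_conn (subE' f fE') (M2_path f).
by case/orP: j => /andP[/eqP-> /eqP->] //; rewrite conn_sym.
Qed.

Lemma M2_subset_Mimg_avoid (F : {set E}) (E' : {set TE}) f :
  E' \subset ~: Minv M2 F -> f \in E' -> {subset M2 f <= Mimg M2 E' :\: F}.
Proof.
move=> /subsetP sE' fE' e ef; rewrite !inE; apply/andP; split.
  apply: contraT; rewrite negbK => eF.
  by have := sE' f fE'; rewrite !inE negb_exists => /forallP/(_ e); rewrite eF ef.
by apply/existsP; exists f; rewrite fE'.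
Qed.

Lemma reach_partitions_shattered (H F S : {set E}) x :
  H :\: F \subset S ->
  let C := [set u | conn ends S x u] in
  partitions_shattered ends tends M1 M2 H F C (~: C).
Proof.
move=> sHS C; split; first by rewrite disjoints_subset setCK.
by move=> v _; apply: conn_class_split.
Qed.

End TreeImage.

Theorem claim4p3 (R : realFieldType) (V E : finType) (ends : E -> V * V)
  (safe : {set E}) (p q k : nat) (s t : 'I_k -> V) (H : {set E}) (xt : E -> R)
  (TV TE : finType) (tends : TE -> TV * TV) (M1 : TV -> V) (M2 : TE -> seq E)
  (F : {set E}) (E' : {set TE}) :
  (0 < p + q)%N ->
  flex_connected ends safe p q s t H ->
  (forall e, 0 < xt e) ->
  violating ends safe p q s t H F ->
  tree_embedding ends tends M1 M2 ->
  good ends xt tends M1 M2 F ->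
  E' \subset ~: Minv M2 F ->
  (forall A' B' : {set V}, inZ ends tends M1 M2 s t H F A' B' ->
     exists a b, [/\ leaf tends a, leaf tends b, M1 a \in A', M1 b \in B' &
                    conn tends E' a b]) ->
  forall i : 'I_k, conn ends ((Mimg M2 E' :|: H) :\: F) (s i) (t i).
Proof.
move=> _ _ _ _ [_ [_ [_ M2_path]]] _ sE' HZ i.
set S := (Mimg M2 E' :|: H) :\: F; set C := [set u | conn ends S (s i) u].
have sHS : H :\: F \subset S by rewrite setSD ?subsetUr.
have inZ_C : inZ ends tends M1 M2 s t H F
    (C :|: Defs.comp ends H F (s i)) (~: C :|: Defs.comp ends H F (t i)).
  by exists C, (~: C), i; split=> //; apply: reach_partitions_shattered.
have [a [b [_ _ aA bB ab]]] := HZ _ _ inZ_C.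
have aC : conn ends S (s i) (M1 a).
  by move: aA; rewrite !inE => /orP[// | /(conn_sub sHS)].
have bC : conn ends S (s i) (M1 b).
  apply: connect_trans aC (conn_tree_image M2_path _ ab) => f fE' e ef.
  by have := M2_subset_Mimg_avoid sE' fE' ef; rewrite !inE => /andP[-> ->].
move: bB; rewrite !inE bC /= => tb.
by rewrite (conn_class_mem (s i) sHS tb).
Qed.
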